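(* Let $N\ge 4$ and $\ell>0$. For every equilateral polygon $\mathcal{P}_N=\{y_1,\dots,y_N\}\subset\mathbb{R}^2$ with edge length $\ell$, the sum of lengths of its $2$-diagonals satisfies $\mathcal{D}_2(\mathcal{P}_N)=\sum_{i=1}^N|y_i-y_{i+2}|\le \mathcal{D}_2(\tilde{\mathcal{P}}_N)=2N\ell\cos\frac{\pi}{N}$, with equality only if $\mathcal{P}_N$ is a regular polygon; that is, property $(P_2)$ holds globally in dimension $d=2$.
   Context: A polygon is identified with the ordered set of its vertices $\{y_1,\dots,y_N\}$, indices taken mod $N$; it is equilateral with edge length $\ell$ if $|y_{i+1}-y_i|=\ell$ for all $i$. The regular polygon $\tilde{\mathcal{P}}_N$ of edge length $\ell$ is the planar convex regular $N$-gon with consecutive vertices adjacent, lying on a circle of radius $\ell\,(2\sin\frac{\pi}{N})^{-1}$, determined up to Euclidean transformations. Property $(P_2)$: the sum $\mathcal{D}_2$ of lengths of all $2$-diagonals $[y_i,y_{i+2}]$ is, among equilateral polygons with fixed edge length $\ell$, uniquely maximized (up to Euclidean transformations) by the regular polygon. *)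

From Stdlib Require Import Reals Lra Lia.
Open Scope R_scope.

Definition pt := (R * R)%type.

Definition dist2 (p q : pt) : R :=
  sqrt ((fst p - fst q) ^ 2 + (snd p - snd q) ^ 2).

(* A polygon with N vertices is a map y : nat -> pt, of which only the values
   y 0, ..., y (N-1) matter; indices are always taken mod N. *)
Definition vtx (N : nat) (y : nat -> pt) (i : nat) : pt := y (i mod N)%nat.

Definition equilateral (N : nat) (l : R) (y : nat -> pt) : Prop :=
  forall i : nat, (i < N)%nat -> dist2 (vtx N y (S i)) (vtx N y i) = l.

Definition D2 (N : nat) (y : nat -> pt) : R :=
  sum_f_R0 (fun i => dist2 (vtx N y i) (vtx N y (i + 2))) (N - 1).

Definition reg_polygon (N : nat) (l : R) (i : nat) : pt :=
  let r := l / (2 * sin (PI / INR N)) in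
  (r * cos (2 * PI * INR i / INR N), r * sin (2 * PI * INR i / INR N)).

Definition isometry (f : pt -> pt) : Prop :=
  forall p q : pt, dist2 (f p) (f q) = dist2 p q.

Definition is_regular (N : nat) (l : R) (y : nat -> pt) : Prop :=
  exists f : pt -> pt, isometry f /\
    forall i : nat, (i < N)%nat -> y i = f (reg_polygon N l i).

From Stdlib Require Import Reals Lra Lia Psatz.
Open Scope R_scope.

(* Lift the edge directions of the polygon continuously to angles [psi_0, ..., psi_N],
   so that the turning angles [d_j = psi_(j+1) - psi_j] lie in [[-PI, PI]]; then
   [|y_j - y_(j+2)| = 2 l cos (d_j / 2)].  Because the polygon closes, the total
   absolute turning [sum |d_j|] is at least [2 PI]: otherwise the total turning,
   a multiple of [2 PI], vanishes, all directions lie within an open half-turn, and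
   the edge vectors cannot sum to zero.  Bounding [cos] by its tangent at [PI / N]
   gives [D2 <= 2 N l cos (PI / N) - l sin (PI / N) (sum |d_j| - 2 PI)].  Equality
   forces [|d_j| = 2 PI / N] for all [j], hence [sum |d_j| = 2 PI], which in turn
   forces all [d_j] to have the same sign: the polygon turns uniformly and is
   regular. *)

(** * Finite sums and total variation *)

Lemma sum_f_R0_telescope (g : nat -> R) (n : nat) :
  sum_f_R0 (fun i => g (S i) - g i) n = g (S n) - g O.
Proof. induction n as [|n IH]; simpl in *; [ring | rewrite IH; ring]. Qed.

Lemma sum_f_R0_affine (a b c : R) (f g : nat -> R) (n : nat) :
  sum_f_R0 (fun i => a + b * f i + c * g i) n
  = a * INR (S n) + b * sum_f_R0 f n + c * sum_f_R0 g n.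
Proof.
  induction n as [|n IH]; [simpl; ring|].
  rewrite tech5, IH, tech5, tech5, (S_INR (S n)). ring.
Qed.

Lemma sum_f_R0_nonneg (f : nat -> R) (n : nat) :
  (forall i, (i <= n)%nat -> 0 <= f i) -> 0 <= sum_f_R0 f n.
Proof.
  intros Hf. rewrite <- (Rmult_0_l (INR (S n))), <- sum_cte. now apply sum_Rle.
Qed.

Lemma sum_f_R0_nonneg_eq0 (f : nat -> R) (n : nat) :
  (forall i, (i <= n)%nat -> 0 <= f i) -> sum_f_R0 f n = 0 ->
  forall i, (i <= n)%nat -> f i = 0.
Proof.
  induction n as [|n IH]; intros Hf Hsum i Hi.
  - replace i with O by lia. exact Hsum.
  - rewrite tech5 in Hsum.
    assert (0 <= sum_f_R0 f n) by (apply sum_f_R0_nonneg; intros; apply Hf; lia).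
    assert (0 <= f (S n)) by (apply Hf; lia).
    destruct (Nat.eq_dec i (S n)) as [->|]; [lra|].
    apply IH; [intros; apply Hf; lia | lra | lia].
Qed.

Lemma exists_argmax (f : nat -> R) (n : nat) :
  exists a, (a <= n)%nat /\ forall i, (i <= n)%nat -> f i <= f a.
Proof.
  induction n as [|n [a [Ha Hmax]]].
  - exists O. split; [lia|]. intros i Hi. replace i with O by lia. lra.
  - destruct (Rle_dec (f (S n)) (f a)).
    + exists a. split; [lia|]. intros i Hi.
      destruct (Nat.eq_dec i (S n)) as [->|]; [lra | apply Hmax; lia].
    + exists (S n). split; [lia|]. intros i Hi.
      destruct (Nat.eq_dec i (S n)) as [->|]; [lra|].
      specialize (Hmax i ltac:(lia)). lra.
Qed.

Fixpoint variation (f : nat -> R) (n : nat) : R :=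
  match n with
  | O => 0
  | S k => variation f k + Rabs (f (S k) - f k)
  end.

Lemma variation_sum (f : nat -> R) (n : nat) :
  variation f (S n) = sum_f_R0 (fun i => Rabs (f (S i) - f i)) n.
Proof. induction n as [|n IH]; [simpl; ring | rewrite tech5, <- IH; reflexivity]. Qed.

Lemma variation_opp (f : nat -> R) (n : nat) :
  variation (fun k => - f k) n = variation f n.
Proof.
  induction n as [|n IH]; simpl; [reflexivity|].
  rewrite IH, <- Rabs_Ropp. f_equal. f_equal. ring.
Qed.

Lemma Rabs_sub_le_variation (f : nat -> R) (m n : nat) : (m <= n)%nat ->
  Rabs (f n - f m) <= variation f n - variation f m.
Proof.
  intros Hmn. induction Hmn as [|n Hmn IH].
  - unfold Rminus. rewrite !Rplus_opp_r, Rabs_R0. lra.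
  - simpl. pose proof (Rabs_triang (f n - f m) (f (S n) - f n)).
    replace (f n - f m + (f (S n) - f n)) with (f (S n) - f m) in * by ring. lra.
Qed.

(* A closed path covers the gap [f i - f j] twice: once between [j] and [i],
   once the other way round through [n], where it is back at [f 0]. *)
Lemma closed_range_le_half_variation (f : nat -> R) (n i j : nat) :
  f n = f O -> (i <= n)%nat -> (j <= n)%nat -> f i - f j <= variation f n / 2.
Proof.
  intros Hclosed Hi Hj.
  assert (Hle : forall a b, (a <= b)%nat -> f b - f a <= variation f b - variation f a
                                     /\ f a - f b <= variation f b - variation f a).
  { intros a b Hab. pose proof (Rabs_sub_le_variation f a b Hab).
    pose proof (Rle_abs (f b - f a)). pose proof (Rle_abs (- (f b - f a))).
    rewrite Rabs_Ropp in *. split; lra. }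
  assert (H0 : variation f O = 0) by reflexivity.
  destruct (Nat.le_gt_cases j i) as [Hji|Hij].
  - destruct (Hle j i Hji) as [A _]. destruct (Hle O j ltac:(lia)) as [_ B].
    destruct (Hle i n Hi) as [_ C]. lra.
  - destruct (Hle i j ltac:(lia)) as [_ A]. destruct (Hle O i ltac:(lia)) as [B _].
    destruct (Hle j n Hj) as [C _]. lra.
Qed.

Lemma steps_nonneg_of_variation_eq (f : nat -> R) (n : nat) :
  f n - f O = variation f n -> forall j, (j < n)%nat -> 0 <= f (S j) - f j.
Proof.
  induction n as [|n IH]; intros Heq j Hj; [lia|].
  simpl in Heq.
  pose proof (Rabs_sub_le_variation f 0 n ltac:(lia)) as Hn. simpl in Hn.
  pose proof (Rle_abs (f n - f O)). pose proof (Rle_abs (f (S n) - f n)).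
  destruct (Nat.eq_dec j n) as [->|].
  - pose proof (Rabs_pos (f (S n) - f n)). lra.
  - apply IH; [lra | lia].
Qed.

(** * Angles in the plane *)

Lemma cos2_plus_sin2 (x : R) : cos x ^ 2 + sin x ^ 2 = 1.
Proof. rewrite <- !Rsqr_pow2, Rplus_comm. apply sin2_cos2. Qed.

Definition polar_angle (p : pt) : R :=
  if Rle_dec 0 (snd p) then acos (fst p) else - acos (fst p).

Lemma polar_angle_spec (p : pt) : fst p ^ 2 + snd p ^ 2 = 1 ->
  cos (polar_angle p) = fst p /\ sin (polar_angle p) = snd p /\
  - PI <= polar_angle p <= PI.
Proof.
  destruct p as [x y]; cbn [fst snd]; intros Hunit.
  assert (Hx : -1 <= x <= 1) by nra.
  pose proof (acos_bound x).
  assert (Hsin : sin (acos x) = Rabs y).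
  { rewrite sin_acos, <- sqrt_Rsqr_abs by lra. f_equal. unfold Rsqr. nra. }
  unfold polar_angle; cbn [fst snd]; destruct (Rle_dec 0 y).
  - rewrite cos_acos, Hsin, Rabs_right by lra. lra.
  - rewrite cos_neg, sin_neg, cos_acos, Hsin, Rabs_left by lra. lra.
Qed.

Definition relative_angle (psi : R) (v : pt) : R :=
  polar_angle (xr (fst v) (snd v) psi, yr (fst v) (snd v) psi).

Lemma relative_angle_spec (psi : R) (v : pt) : fst v ^ 2 + snd v ^ 2 = 1 ->
  cos (psi + relative_angle psi v) = fst v /\ sin (psi + relative_angle psi v) = snd v /\
  - PI <= relative_angle psi v <= PI.
Proof.
  destruct v as [x y]; cbn [fst snd]; intros Hunit.
  pose proof (cos2_plus_sin2 psi) as Hpsi.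
  unfold relative_angle, xr, yr; cbn [fst snd].
  destruct (polar_angle_spec (x * cos psi + y * sin psi, - x * sin psi + y * cos psi))
    as [Hc [Hs Hb]]; cbn [fst snd] in *.
  { replace ((x * cos psi + y * sin psi) ^ 2 + (- x * sin psi + y * cos psi) ^ 2)
      with ((x ^ 2 + y ^ 2) * (cos psi ^ 2 + sin psi ^ 2)) by ring.
    rewrite Hunit, Hpsi. ring. }
  rewrite cos_plus, sin_plus, Hc, Hs. repeat split; try lra.
  - replace (cos psi * (x * cos psi + y * sin psi) - sin psi * (- x * sin psi + y * cos psi))
      with (x * (cos psi ^ 2 + sin psi ^ 2)) by ring. rewrite Hpsi. ring.
  - replace (sin psi * (x * cos psi + y * sin psi) + cos psi * (- x * sin psi + y * cos psi))
      with (y * (cos psi ^ 2 + sin psi ^ 2)) by ring. rewrite Hpsi. ring.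
Qed.

(* With [a = X - d/2] and [a + d = X + d/2] the two steps add up to
   [2 l cos (d/2)] times the unit vector of angle [X]. *)
Lemma dist2_two_steps (p q : pt) (l a d : R) : 0 <= l -> - PI <= d <= PI ->
  fst q - fst p = l * (cos a + cos (a + d)) ->
  snd q - snd p = l * (sin a + sin (a + d)) ->
  dist2 p q = 2 * l * cos (d / 2).
Proof.
  intros Hl Hd Hx Hy. unfold dist2.
  replace ((fst p - fst q) ^ 2 + (snd p - snd q) ^ 2)
    with ((fst q - fst p) ^ 2 + (snd q - snd p) ^ 2) by ring.
  rewrite Hx, Hy.
  set (h := d / 2). set (X := a + h).
  replace a with (X - h) by (unfold X; ring).
  replace (X - h + d) with (X + h) by (unfold X, h; field).
  rewrite cos_plus, cos_minus, sin_plus, sin_minus.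
  assert (0 <= cos h) by (apply cos_ge_0; unfold h; lra).
  replace ((l * (cos X * cos h + sin X * sin h + (cos X * cos h - sin X * sin h))) ^ 2 +
           (l * (sin X * cos h - cos X * sin h + (sin X * cos h + cos X * sin h))) ^ 2)
    with ((2 * l * cos h) ^ 2 * (cos X ^ 2 + sin X ^ 2)) by ring.
  rewrite cos2_plus_sin2, Rmult_1_r. apply sqrt_pow2. nra.
Qed.

Definition tangent_gap (a t : R) : R := cos a - sin a * (t - a) - cos t.

Lemma tangent_gap_pos (a t : R) : 0 < a < PI / 2 -> 0 <= t <= PI / 2 -> t <> a ->
  0 < tangent_gap a t.
Proof.
  intros Ha Ht Hne. unfold tangent_gap.
  destruct (Rlt_or_le a t) as [Hlt|Hle].
  - destruct (MVT_cor2 cos (fun x => - sin x) a t Hlt (fun c _ => derivable_pt_lim_cos c))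
      as [c [Hc1 Hc2]].
    assert (sin a < sin c) by (apply sin_increasing_1; lra).
    assert (sin a * (t - a) < sin c * (t - a)) by (apply Rmult_lt_compat_r; lra).
    lra.
  - assert (Hlt : t < a) by lra.
    destruct (MVT_cor2 cos (fun x => - sin x) t a Hlt (fun c _ => derivable_pt_lim_cos c))
      as [c [Hc1 Hc2]].
    assert (sin c < sin a) by (apply sin_increasing_1; lra).
    assert (sin c * (a - t) < sin a * (a - t)) by (apply Rmult_lt_compat_r; lra).
    lra.
Qed.

Lemma tangent_gap_nonneg (a t : R) : 0 < a < PI / 2 -> 0 <= t <= PI / 2 ->
  0 <= tangent_gap a t.
Proof.
  intros Ha Ht. destruct (Req_dec t a) as [->|Hne].
  - unfold tangent_gap. lra.
  - left. now apply tangent_gap_pos.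
Qed.

Lemma cos_eq_1_small (x : R) : cos x = 1 -> Rabs x < 2 * PI -> x = 0.
Proof.
  intros Hc Hx. replace x with (2 * (x / 2)) in Hc by field.
  rewrite cos_2a_sin in Hc. assert (Hs : sin (x / 2) = 0) by nra.
  pose proof PI_RGT_0.
  destruct (Rtotal_order x 0) as [Hlt|[Heq|Hgt]]; auto.
  - rewrite Rabs_left in Hx by lra.
    pose proof (sin_lt_0_var (x / 2) ltac:(lra) ltac:(lra)). lra.
  - rewrite Rabs_right in Hx by lra.
    pose proof (sin_gt_0 (x / 2) ltac:(lra) ltac:(lra)). lra.
Qed.

Lemma PI_div_bounds (N : nat) : (1 < N)%nat -> 0 < PI / INR N <= PI / 2.
Proof.
  intros HN. pose proof PI_RGT_0.
  assert (H2 : 2 <= INR N) by (replace 2 with (INR 2) by reflexivity; apply le_INR; lia).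
  split.
  - apply Rdiv_lt_0_compat; lra.
  - apply Rmult_le_compat_l; [lra|]. apply Rinv_le_contravar; lra.
Qed.

Lemma PI_div_lt_PI2 (N : nat) : (2 < N)%nat -> PI / INR N < PI / 2.
Proof.
  intros HN. pose proof PI_RGT_0.
  assert (H3 : 3 <= INR N) by (replace 3 with (INR 3) by (simpl; ring); apply le_INR; lia).
  apply Rmult_lt_compat_l; [lra|]. apply Rinv_lt_contravar; lra.
Qed.

(** * Turning angles of an equilateral polygon *)

Lemma vtx_S_mod (N : nat) (y : nat -> pt) (j : nat) :
  vtx N y (S (j mod N)) = vtx N y (S j).
Proof.
  unfold vtx. rewrite <- (Nat.add_1_r (j mod N)), <- (Nat.add_1_r j).
  now rewrite Nat.Div0.add_mod_idemp_l.
Qed.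

Lemma vtx_mod (N : nat) (y : nat -> pt) (j : nat) : vtx N y (j mod N) = vtx N y j.
Proof. unfold vtx. now rewrite Nat.Div0.mod_mod. Qed.

Lemma vtx_add_N (N : nat) (y : nat -> pt) (j : nat) : (0 < N)%nat ->
  vtx N y (j + N) = vtx N y j.
Proof.
  intros HN. unfold vtx. f_equal.
  rewrite <- (Nat.mul_1_l N) at 1. apply Nat.Div0.mod_add.
Qed.

Section EquilateralPolygon.

Variables (N : nat) (l : R) (y : nat -> pt).
Hypotheses (HN : (0 < N)%nat) (Hl : 0 < l) (Hy : equilateral N l y).

Lemma equilateral_all (j : nat) : dist2 (vtx N y (S j)) (vtx N y j) = l.
Proof.
  rewrite <- vtx_S_mod, <- (vtx_mod N y j).
  apply Hy, Nat.mod_upper_bound. lia.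
Qed.

Definition edge_dir (j : nat) : pt :=
  ((fst (vtx N y (S j)) - fst (vtx N y j)) / l, (snd (vtx N y (S j)) - snd (vtx N y j)) / l).

Lemma edge_dir_unit (j : nat) : fst (edge_dir j) ^ 2 + snd (edge_dir j) ^ 2 = 1.
Proof.
  pose proof (equilateral_all j) as Hj. unfold dist2 in Hj. unfold edge_dir; cbn [fst snd].
  set (a := fst (vtx N y (S j)) - fst (vtx N y j)) in *.
  set (b := snd (vtx N y (S j)) - snd (vtx N y j)) in *.
  assert (Hab : a ^ 2 + b ^ 2 = l ^ 2) by (rewrite <- Hj, pow2_sqrt; nra).
  replace ((a / l) ^ 2 + (b / l) ^ 2) with ((a ^ 2 + b ^ 2) / l ^ 2) by (field; lra).
  rewrite Hab. field. lra.
Qed.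

(* A continuous lift of the edge directions: [dir_angle (S j) - dir_angle j] is
   the turning angle at vertex [j+1], chosen in [[-PI, PI]]. *)
Fixpoint dir_angle (j : nat) : R :=
  match j with
  | O => polar_angle (edge_dir O)
  | S k => dir_angle k + relative_angle (dir_angle k) (edge_dir (S k))
  end.

Definition turning (j : nat) : R := dir_angle (S j) - dir_angle j.

Lemma turning_bound (j : nat) : - PI <= turning j <= PI.
Proof.
  unfold turning; simpl dir_angle.
  destruct (relative_angle_spec (dir_angle j) _ (edge_dir_unit (S j))) as [_ [_ Hb]]. lra.
Qed.

Lemma vtx_step (j : nat) :
  fst (vtx N y (S j)) - fst (vtx N y j) = l * cos (dir_angle j) /\
  snd (vtx N y (S j)) - snd (vtx N y j) = l * sin (dir_angle j).
Proof.
  assert (Hdir : cos (dir_angle j) = fst (edge_dir j) /\ sin (dir_angle j) = snd (edge_dir j)).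
  { destruct j as [|j]; simpl dir_angle.
    - destruct (polar_angle_spec _ (edge_dir_unit O)) as [Hc [Hs _]]. auto.
    - destruct (relative_angle_spec (dir_angle j) _ (edge_dir_unit (S j))) as [Hc [Hs _]].
      auto. }
  destruct Hdir as [-> ->]. unfold edge_dir; cbn [fst snd]. split; field; lra.
Qed.

Lemma sum_cos_sin_dir_angle :
  sum_f_R0 (fun j => cos (dir_angle j)) (N - 1) = 0 /\
  sum_f_R0 (fun j => sin (dir_angle j)) (N - 1) = 0.
Proof.
  assert (Hclosed : vtx N y (S (N - 1)) = vtx N y O).
  { replace (S (N - 1)) with (O + N)%nat by lia. apply vtx_add_N. lia. }
  split; apply (Rmult_eq_reg_l l); try lra; rewrite Rmult_0_r, scal_sum.
  - rewrite (sum_eq _ (fun j => fst (vtx N y (S j)) - fst (vtx N y j)))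
      by (intros j _; rewrite (proj1 (vtx_step j)); ring).
    rewrite (sum_f_R0_telescope (fun k => fst (vtx N y k))), Hclosed. ring.
  - rewrite (sum_eq _ (fun j => snd (vtx N y (S j)) - snd (vtx N y j)))
      by (intros j _; rewrite (proj2 (vtx_step j)); ring).
    rewrite (sum_f_R0_telescope (fun k => snd (vtx N y k))), Hclosed. ring.
Qed.

Lemma sum_sin_cos_dir_angle_sub (w : R) :
  sum_f_R0 (fun j => sin (dir_angle j - w)) (N - 1) = 0 /\
  sum_f_R0 (fun j => cos (dir_angle j - w)) (N - 1) = 0.
Proof.
  destruct sum_cos_sin_dir_angle as [Hc Hs]. split.
  - rewrite (sum_eq _ (fun j => 0 + cos w * sin (dir_angle j) + (- sin w) * cos (dir_angle j)))
      by (intros j _; rewrite sin_minus; ring).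
    rewrite sum_f_R0_affine, Hc, Hs. ring.
  - rewrite (sum_eq _ (fun j => 0 + cos w * cos (dir_angle j) + sin w * sin (dir_angle j)))
      by (intros j _; rewrite cos_minus; ring).
    rewrite sum_f_R0_affine, Hc, Hs. ring.
Qed.

Lemma cos_total_turning : cos (dir_angle N - dir_angle O) = 1.
Proof.
  assert (H1 : vtx N y (S N) = vtx N y 1) by exact (vtx_add_N N y 1 HN).
  assert (H0 : vtx N y N = vtx N y O) by exact (vtx_add_N N y O HN).
  destruct (vtx_step N) as [HxN HyN]. destruct (vtx_step O) as [Hx0 Hy0].
  rewrite H1, H0 in HxN, HyN.
  assert (Hc : cos (dir_angle N) = cos (dir_angle O)) by (apply (Rmult_eq_reg_l l); lra).
  assert (Hs : sin (dir_angle N) = sin (dir_angle O)) by (apply (Rmult_eq_reg_l l); lra).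
  rewrite cos_minus, Hc, Hs, <- cos2_plus_sin2 with (x := dir_angle O). ring.
Qed.

Lemma D2_turning :
  D2 N y = sum_f_R0 (fun j => 2 * l * cos (Rabs (turning j) / 2)) (N - 1).
Proof.
  apply sum_eq. intros j _.
  destruct (vtx_step j) as [Hx0 Hy0]. destruct (vtx_step (S j)) as [Hx1 Hy1].
  replace (dir_angle (S j)) with (dir_angle j + turning j) in Hx1, Hy1
    by (unfold turning; ring).
  assert (Heven : cos (Rabs (turning j) / 2) = cos (turning j / 2)).
  { unfold Rabs; destruct (Rcase_abs (turning j)); [|reflexivity].
    rewrite <- cos_neg. f_equal. field. }
  rewrite Heven. replace (j + 2)%nat with (S (S j)) by lia.
  apply (dist2_two_steps _ _ l (dir_angle j)); [lra | apply turning_bound | lra | lra].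
Qed.

(* All directions lie in the half-turn below the maximal one [dir_angle a], so the
   sines [sin (dir_angle a - dir_angle j)] are nonnegative; they sum to zero
   because the polygon closes. *)
Lemma edges_parallel_of_zero_turning :
  dir_angle N = dir_angle O -> variation dir_angle N <= 2 * PI ->
  exists a, (a < N)%nat /\ forall j, (j <= N)%nat ->
    0 <= dir_angle a - dir_angle j <= variation dir_angle N / 2 /\
    sin (dir_angle a - dir_angle j) = 0.
Proof.
  intros Hclosed Hvar.
  destruct (exists_argmax dir_angle (N - 1)) as [a [Ha Hmax]].
  assert (Hrange : forall j, (j <= N)%nat ->
            0 <= dir_angle a - dir_angle j <= variation dir_angle N / 2).
  { intros j Hj. split.
    - destruct (Nat.eq_dec j N) as [->|Hne].
      + rewrite Hclosed. specialize (Hmax O ltac:(lia)). lra.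
      + specialize (Hmax j ltac:(lia)). lra.
    - apply closed_range_le_half_variation; auto; lia. }
  exists a. split; [lia|].
  assert (Hsin : forall j, (j <= N - 1)%nat -> sin (dir_angle a - dir_angle j) = 0).
  { apply sum_f_R0_nonneg_eq0.
    - intros j Hj. destruct (Hrange j ltac:(lia)). apply sin_ge_0; lra.
    - rewrite (sum_eq _ (fun j => sin (dir_angle j - dir_angle a) * -1))
        by (intros j _; rewrite <- Ropp_minus_distr, sin_neg; ring).
      rewrite <- scal_sum, (proj1 (sum_sin_cos_dir_angle_sub _)). ring. }
  intros j Hj. split; [now apply Hrange|].
  destruct (Nat.eq_dec j N) as [->|]; [rewrite Hclosed|]; apply Hsin; lia.
Qed.

Lemma total_turning_le_variation :
  Rabs (dir_angle N - dir_angle O) <= variation dir_angle N.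
Proof.
  rewrite <- (Rminus_0_r (variation dir_angle N)).
  exact (Rabs_sub_le_variation dir_angle O N ltac:(lia)).
Qed.

Lemma zero_total_turning : Rabs (dir_angle N - dir_angle O) < 2 * PI ->
  dir_angle N = dir_angle O.
Proof.
  intros Htot. apply Rminus_diag_uniq, cos_eq_1_small; [apply cos_total_turning | exact Htot].
Qed.

Lemma two_PI_le_variation_dir_angle : 2 * PI <= variation dir_angle N.
Proof.
  destruct (Rle_lt_dec (2 * PI) (variation dir_angle N)) as [|Hvar]; [assumption|].
  exfalso.
  pose proof total_turning_le_variation.
  destruct (edges_parallel_of_zero_turning (zero_total_turning ltac:(lra)) ltac:(lra))
    as [a [Ha Hpar]].
  assert (Hcos : forall j, (j <= N - 1)%nat -> cos (dir_angle j - dir_angle a) = 1).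
  { intros j Hj. destruct (Hpar j ltac:(lia)) as [Hb Hs].
    replace (dir_angle j - dir_angle a) with 0; [apply cos_0|].
    destruct (Req_dec (dir_angle a - dir_angle j) 0) as [E|Hne]; [lra|].
    pose proof (sin_gt_0 (dir_angle a - dir_angle j) ltac:(lra) ltac:(lra)). lra. }
  pose proof (proj2 (sum_sin_cos_dir_angle_sub (dir_angle a))) as Hsum.
  rewrite (sum_eq _ _ _ Hcos), sum_cte in Hsum.
  pose proof (lt_0_INR (S (N - 1)) ltac:(lia)). lra.
Qed.

Lemma D2_defect :
  let h := PI / INR N in
  D2 N y = 2 * INR N * l * cos h - l * sin h * (variation dir_angle N - 2 * PI)
           - 2 * l * sum_f_R0 (fun j => tangent_gap h (Rabs (turning j) / 2)) (N - 1).
Proof.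
  intros h.
  assert (Hvar : variation dir_angle N = sum_f_R0 (fun j => Rabs (turning j)) (N - 1)).
  { replace N with (S (N - 1)) at 1 by lia. apply variation_sum. }
  assert (HNh : INR N * h = PI) by (unfold h; field; apply not_0_INR; lia).
  rewrite D2_turning, Hvar, <- HNh.
  rewrite (sum_eq _ (fun j => 2 * l * (cos h + h * sin h) + (- l * sin h) * Rabs (turning j)
                              + (-2 * l) * tangent_gap h (Rabs (turning j) / 2)))
    by (intros j _; unfold tangent_gap; field).
  rewrite sum_f_R0_affine. replace (S (N - 1)) with N by lia. ring.
Qed.

Lemma half_abs_turning_bound (j : nat) : 0 <= Rabs (turning j) / 2 <= PI / 2.
Proof.
  pose proof (turning_bound j). pose proof (Rabs_pos (turning j)).
  assert (Rabs (turning j) <= PI) by (apply Rabs_le; lra). lra.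
Qed.

Section AtLeastThreeVertices.

Hypothesis HN3 : (2 < N)%nat.

Let h := PI / INR N.

Let h_bounds : 0 < h < PI / 2.
Proof. pose proof (PI_div_bounds N ltac:(lia)). pose proof (PI_div_lt_PI2 N HN3). unfold h. lra. Qed.

Let tangent_gaps_nonneg (j : nat) : 0 <= tangent_gap h (Rabs (turning j) / 2).
Proof. apply tangent_gap_nonneg; [exact h_bounds | apply half_abs_turning_bound]. Qed.

Let gap_sum_nonneg :
  0 <= 2 * l * sum_f_R0 (fun j => tangent_gap h (Rabs (turning j) / 2)) (N - 1).
Proof.
  apply Rmult_le_pos; [lra|]. apply sum_f_R0_nonneg. intros. apply tangent_gaps_nonneg.
Qed.

Let excess_turning_nonneg : 0 <= l * sin h * (variation dir_angle N - 2 * PI).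
Proof.
  pose proof two_PI_le_variation_dir_angle.
  assert (0 < sin h) by (apply sin_gt_0; lra).
  apply Rmult_le_pos; [apply Rmult_le_pos|]; lra.
Qed.

Lemma D2_le : D2 N y <= 2 * INR N * l * cos h.
Proof. rewrite D2_defect. fold h. lra. Qed.

Lemma abs_turning_of_D2_eq : D2 N y = 2 * INR N * l * cos h ->
  forall j, (j < N)%nat -> Rabs (turning j) = 2 * PI / INR N.
Proof.
  intros Heq j Hj. rewrite D2_defect in Heq. fold h in Heq.
  assert (Hgap : tangent_gap h (Rabs (turning j) / 2) = 0).
  { apply (sum_f_R0_nonneg_eq0 (fun k => tangent_gap h (Rabs (turning k) / 2)) (N - 1));
      [intros; apply tangent_gaps_nonneg | | lia].
    apply (Rmult_eq_reg_l (2 * l)); lra. }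
  destruct (Req_dec (Rabs (turning j) / 2) h) as [E|Hne].
  - unfold h in E. lra.
  - pose proof (tangent_gap_pos h _ h_bounds (half_abs_turning_bound j) Hne). lra.
Qed.

Lemma turning_constant : (forall j, (j < N)%nat -> Rabs (turning j) = 2 * PI / INR N) ->
  exists s, (s = 1 \/ s = -1) /\ forall j, (j < N)%nat -> turning j = s * (2 * PI / INR N).
Proof.
  intros Habs. pose proof h_bounds.
  assert (Hvar : variation dir_angle N = 2 * PI).
  { replace N with (S (N - 1)) at 1 by lia. rewrite variation_sum.
    rewrite (sum_eq _ (fun _ => 2 * PI / INR N)) by (intros; apply Habs; lia).
    rewrite sum_cte. replace (S (N - 1)) with N by lia. field. apply not_0_INR. lia. }
  pose proof total_turning_le_variation as Htot.
  destruct (Req_dec (dir_angle N - dir_angle O) (variation dir_angle N)) as [Hpos|Hpos].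
  { exists 1. split; [now left|]. intros j Hj.
    pose proof (steps_nonneg_of_variation_eq _ _ Hpos j Hj) as Hstep. fold (turning j) in Hstep.
    rewrite <- (Habs j Hj), Rabs_right; lra. }
  destruct (Req_dec (dir_angle O - dir_angle N) (variation dir_angle N)) as [Hneg|Hneg].
  { exists (-1). split; [now right|]. intros j Hj. rewrite <- variation_opp in Hneg.
    pose proof (steps_nonneg_of_variation_eq (fun k => - dir_angle k) N
                  ltac:(cbv beta; lra) j Hj) as Hstep.
    rewrite <- (Habs j Hj), Rabs_left1; unfold turning; lra. }
  exfalso.
  assert (Hclosed : dir_angle N = dir_angle O).
  { apply zero_total_turning, Rabs_def1.
    - pose proof (Rle_abs (dir_angle N - dir_angle O)). lra.
    - pose proof (Rle_abs (- (dir_angle N - dir_angle O))).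
      rewrite Rabs_Ropp in *. lra. }
  destruct (edges_parallel_of_zero_turning Hclosed ltac:(lra)) as [a [Ha Hpar]].
  destruct (Hpar (S a) ltac:(lia)) as [_ Hsin].
  replace (dir_angle a - dir_angle (S a)) with (- turning a) in Hsin by (unfold turning; ring).
  rewrite sin_neg in Hsin. specialize (Habs a Ha). unfold h in *.
  unfold Rabs in Habs. destruct (Rcase_abs (turning a)).
  - pose proof (sin_lt_0_var (turning a) ltac:(lra) ltac:(lra)). lra.
  - pose proof (sin_gt_0 (turning a) ltac:(lra) ltac:(lra)). lra.
Qed.

End AtLeastThreeVertices.

Lemma vertex_steps_of_constant_turning (s : R) :
  (forall j, (j < N)%nat -> turning j = s * (2 * PI / INR N)) ->
  forall j, (S j < N)%nat ->
    fst (y (S j)) - fst (y j) = l * cos (dir_angle O + s * (2 * PI * INR j / INR N)) /\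
    snd (y (S j)) - snd (y j) = l * sin (dir_angle O + s * (2 * PI * INR j / INR N)).
Proof.
  intros Hturn j Hj.
  assert (Hangle : forall k, (k <= N)%nat ->
            dir_angle k = dir_angle O + s * (2 * PI * INR k / INR N)).
  { induction k as [|k IH]; intros Hk; [simpl INR; field; apply not_0_INR; lia|].
    replace (dir_angle (S k)) with (dir_angle k + turning k) by (unfold turning; ring).
    rewrite IH, Hturn, S_INR by lia. field. apply not_0_INR. lia. }
  rewrite <- Hangle by lia.
  replace (y (S j)) with (vtx N y (S j)) by (unfold vtx; f_equal; apply Nat.mod_small; lia).
  replace (y j) with (vtx N y j) by (unfold vtx; f_equal; apply Nat.mod_small; lia).
  apply vtx_step.
Qed.

End EquilateralPolygon.

(** * The regular polygon *)

Lemma reg_polygon_mod (N : nat) (l : R) (i : nat) : (0 < N)%nat ->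
  reg_polygon N l (i mod N) = reg_polygon N l i.
Proof.
  intros HN. assert (HNpos : 0 < INR N) by (apply lt_0_INR; lia).
  unfold reg_polygon; cbv zeta.
  assert (E : 2 * PI * INR i / INR N = 2 * PI * INR (i mod N) / INR N + 2 * INR (i / N) * PI).
  { rewrite (Nat.div_mod_eq i N) at 1. rewrite plus_INR, mult_INR. field. lra. }
  now rewrite E, cos_period, sin_period.
Qed.

(* Each edge is the chord of an arc of angle [2 PI / N]: its direction is the
   tangent direction at the midpoint of that arc. *)
Lemma reg_polygon_step (N : nat) (l : R) (j : nat) : (1 < N)%nat ->
  let theta := 2 * PI * INR j / INR N + PI / INR N + PI / 2 in
  fst (reg_polygon N l (S j)) - fst (reg_polygon N l j) = l * cos theta /\
  snd (reg_polygon N l (S j)) - snd (reg_polygon N l j) = l * sin theta.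
Proof.
  intros HN theta. pose proof (PI_div_bounds N HN) as Hh. pose proof PI_RGT_0.
  assert (HNpos : 0 < INR N) by (apply lt_0_INR; lia).
  set (h := PI / INR N) in *.
  assert (Hsin : 0 < sin h) by (apply sin_gt_0; lra).
  set (X := 2 * PI * INR j / INR N + h).
  unfold reg_polygon; cbv zeta; cbn [fst snd].
  replace (2 * PI * INR (S j) / INR N) with (X + h) by (unfold X, h; rewrite S_INR; field; lra).
  replace (2 * PI * INR j / INR N) with (X - h) by (unfold X; ring).
  replace theta with (X + PI / 2) by (unfold theta, X; ring).
  fold h. rewrite (cos_plus X h), (cos_minus X h), (sin_plus X h), (sin_minus X h),
    (cos_plus X (PI / 2)), (sin_plus X (PI / 2)), cos_PI2, sin_PI2.
  split; field; lra.
Qed.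

Lemma reg_polygon_diagonal (N : nat) (l : R) (i : nat) : (1 < N)%nat -> 0 <= l ->
  dist2 (reg_polygon N l i) (reg_polygon N l (i + 2)) = 2 * l * cos (PI / INR N).
Proof.
  intros HN Hl. pose proof (PI_div_bounds N HN).
  destruct (reg_polygon_step N l i HN) as [Hx0 Hy0].
  destruct (reg_polygon_step N l (S i) HN) as [Hx1 Hy1].
  set (theta := 2 * PI * INR i / INR N + PI / INR N + PI / 2) in *.
  replace (2 * PI * INR (S i) / INR N + PI / INR N + PI / 2) with (theta + 2 * (PI / INR N))
    in Hx1, Hy1 by (unfold theta; rewrite S_INR; field; apply not_0_INR; lia).
  replace (cos (PI / INR N)) with (cos (2 * (PI / INR N) / 2))
    by (f_equal; field; apply not_0_INR; lia).
  replace (i + 2)%nat with (S (S i)) by lia.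
  apply (dist2_two_steps _ _ l theta); lra.
Qed.

Lemma D2_reg_polygon (N : nat) (l : R) : (1 < N)%nat -> 0 <= l ->
  D2 N (reg_polygon N l) = 2 * INR N * l * cos (PI / INR N).
Proof.
  intros HN Hl. unfold D2, vtx.
  rewrite (sum_eq _ (fun _ => 2 * l * cos (PI / INR N))).
  - rewrite sum_cte. replace (S (N - 1)) with N by lia. ring.
  - intros i _. rewrite !reg_polygon_mod by lia. now apply reg_polygon_diagonal.
Qed.

Definition rot_refl (s g : R) (v : pt) : pt :=
  (cos g * fst v - s * sin g * snd v, sin g * fst v + s * cos g * snd v).

Definition motion (s g : R) (p0 q0 : pt) (p : pt) : pt :=
  let v := rot_refl s g (fst p - fst p0, snd p - snd p0) in (fst q0 + fst v, snd q0 + snd v).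

Lemma motion_isometry (s g : R) (p0 q0 : pt) : s = 1 \/ s = -1 ->
  isometry (motion s g p0 q0).
Proof.
  intros Hs p q. unfold dist2, motion, rot_refl; cbn [fst snd]. f_equal.
  assert (Hs2 : s ^ 2 = 1) by (destruct Hs as [-> | ->]; ring).
  set (a := fst p - fst q). set (b := snd p - snd q).
  transitivity ((cos g ^ 2 + sin g ^ 2) * (a ^ 2 + s ^ 2 * b ^ 2)); [unfold a, b; ring|].
  rewrite cos2_plus_sin2, Hs2. ring.
Qed.

Lemma motion_base (s g : R) (p0 q0 : pt) : motion s g p0 q0 p0 = q0.
Proof.
  destruct q0 as [x y]. unfold motion, rot_refl; cbn [fst snd]. f_equal; ring.
Qed.

Lemma motion_step (s g l theta : R) (p0 q0 p q : pt) : s = 1 \/ s = -1 ->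
  fst q - fst p = l * cos theta -> snd q - snd p = l * sin theta ->
  fst (motion s g p0 q0 q) - fst (motion s g p0 q0 p) = l * cos (g + s * theta) /\
  snd (motion s g p0 q0 q) - snd (motion s g p0 q0 p) = l * sin (g + s * theta).
Proof.
  intros Hs Hx Hy. unfold motion, rot_refl; cbn [fst snd].
  assert (Hsign : cos (s * theta) = cos theta /\ sin (s * theta) = s * sin theta).
  { destruct Hs as [-> | ->].
    - rewrite !Rmult_1_l. auto.
    - replace (-1 * theta) with (- theta) by ring. rewrite cos_neg, sin_neg. split; ring. }
  destruct Hsign as [Hcos Hsin].
  rewrite cos_plus, sin_plus, Hcos, Hsin. split.
  - transitivity (cos g * (fst q - fst p) - s * sin g * (snd q - snd p)); [ring|].
    rewrite Hx, Hy. ring.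
  - transitivity (sin g * (fst q - fst p) + s * cos g * (snd q - snd p)); [ring|].
    rewrite Hx, Hy. ring.
Qed.

Lemma is_regular_of_steps (N : nat) (l : R) (y : nat -> pt) (s t : R) :
  (1 < N)%nat -> s = 1 \/ s = -1 ->
  (forall j, (S j < N)%nat ->
    fst (y (S j)) - fst (y j) = l * cos (t + s * (2 * PI * INR j / INR N)) /\
    snd (y (S j)) - snd (y j) = l * sin (t + s * (2 * PI * INR j / INR N))) ->
  is_regular N l y.
Proof.
  intros HN Hs Hsteps.
  (* [g] turns the direction of edge [j] of [reg_polygon] (see [reg_polygon_step])
     into the direction [t + s * (2 * PI * j / N)] of edge [j] of [y]. *)
  set (g := t - s * (PI / INR N + PI / 2)).
  exists (motion s g (reg_polygon N l O) (y O)). split; [now apply motion_isometry|].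
  induction i as [|i IH]; intros Hi; [symmetry; apply motion_base|].
  destruct (Hsteps i Hi) as [Hx Hy].
  destruct (reg_polygon_step N l i HN) as [Rx Ry].
  destruct (motion_step s g _ _ (reg_polygon N l O) (y O) _ _ Hs Rx Ry) as [Mx My].
  replace (g + s * (2 * PI * INR i / INR N + PI / INR N + PI / 2))
    with (t + s * (2 * PI * INR i / INR N)) in Mx, My by (unfold g; ring).
  rewrite <- IH in Mx, My by lia.
  apply injective_projections; lra.
Qed.

Theorem proposition5p1 (N : nat) (l : R) :
  (4 <= N)%nat -> 0 < l ->
  D2 N (reg_polygon N l) = 2 * INR N * l * cos (PI / INR N) /\
  forall y : nat -> pt, equilateral N l y ->
    D2 N y <= 2 * INR N * l * cos (PI / INR N) /\
    (D2 N y = 2 * INR N * l * cos (PI / INR N) -> is_regular N l y).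
Proof.
  intros HN Hl. assert (HN0 : (0 < N)%nat) by lia. assert (HN3 : (2 < N)%nat) by lia.
  split; [apply D2_reg_polygon; [lia | lra]|].
  intros y Hy. split; [exact (D2_le N l y HN0 Hl Hy HN3)|].
  intros Hmax.
  destruct (turning_constant N l y HN0 Hl Hy HN3 (abs_turning_of_D2_eq N l y HN0 Hl Hy HN3 Hmax))
    as [s [Hs Hturn]].
  apply (is_regular_of_steps N l y s (dir_angle N l y O)); [lia | exact Hs |].
  exact (vertex_steps_of_constant_turning N l y HN0 Hl Hy s Hturn).
Qed.
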